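(* Let $k$ be a field, $A$ a finitely generated commutative $k$-algebra, $k_n=k[t]/(t^{n+1})$, and $B$ a $k_n$-algebra with an isomorphism $gr\,B\simeq A\otimes_kk_n$ such that $B$ induces a deformation of $D(A)$. Suppose there is a $k$-algebra homomorphism $s:D(A)\to D(B)$ with $\tau\circ s=\mathrm{id}$, where $\tau:D(B)\to D(A)$ is the residue map, and regard $B$ as a left $A\otimes_kk_n$-module via $a\cdot b=s(a)(b)$. Then $D({}_BB)=D({}_{A\otimes_kk_n}B)$ as subrings of $\operatorname{End}_{k_n}(B)$.
   Context: All differential operators are $k[t]$-linear. For a $k_n$-algebra $C$ and a left $C$-module $M$, $D({}_CM)=\bigcup_mD^m({}_CM)$ where $D^m({}_CM)=\{d\in\operatorname{End}_{k_n}(M): [f_m,\dots,[f_0,d]\dots]=0\ \forall f_0,\dots,f_m\in C\}$, with $f$ acting through the module structure and $[f,d]=fd-df$. $D({}_BB)$ uses the left multiplication of $B$ on itself; $D(B)=D({}_BB)$; $D(A)$ is the ring of $k$-linear differential operators on $A$, containing $A$. $gr$ is taken for the $t$-adic filtration. The map $\gamma:gr\,D(B)\to\operatorname{End}_{k_n}(gr\,B)$ sends the class of $d\in t^iD(B)$ to the endomorphism $t^jB/t^{j+1}B\to t^{i+j}B/t^{i+j+1}B$ induced by $d$; it lands in $D(gr\,B)$. $B$ induces a deformation of $D(A)$ if $\gamma:gr\,D(B)\to D(gr\,B)$ is an isomorphism; then $D(B)/tD(B)\simeq D(A)$, and $\tau$ is the induced residue map. *)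

From HB Require Import structures.
From mathcomp Require Import all_boot all_order all_algebra.
Set Implicit Arguments. Unset Strict Implicit. Unset Printing Implicit Defensive.
Import GRing.Theory.
Local Open Scope ring_scope.

Definition comm_op (M : zmodType) (f d : M -> M) : M -> M :=
  fun x => f (d x) - d (f x).

Fixpoint iter_comm (M : zmodType) (fs : seq (M -> M)) (d : M -> M) : M -> M :=
  match fs with
  | [::] => d
  | f :: fs' => iter_comm fs' (comm_op f d)
  end.

Definition diff_order (C : Type) (M : zmodType) (act : C -> M -> M)
  (m : nat) (d : M -> M) : Prop :=
  forall fs : seq C, size fs = m.+1 -> forall x, iter_comm (map act fs) d x = 0.

Definition is_diff (C : Type) (M : zmodType) (act : C -> M -> M) (d : M -> M) :=
  exists m, diff_order act m d.

Definition lin_over (R : pzRingType) (M : lmodType R) (d : M -> M) : Prop :=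
  forall (r : R) (x y : M), d (r *: x + y) = r *: d x + d y.

Definition diffop_mod (R : pzRingType) (M : lmodType R) (C : Type)
  (act : C -> M -> M) (d : M -> M) : Prop :=
  lin_over d /\ is_diff act d.

Definition DA (k : fieldType) (A : comAlgType k) (P : A -> A) : Prop :=
  @diffop_mod k A A (fun a x => a * x) P.

(* D(B) = D(_B B), for a k_n-algebra B, i.e. a k[t]-algebra killed by t^(n+1) *)
Definition DB (k : fieldType) (B : algType {poly k}) (d : B -> B) : Prop :=
  @diffop_mod {poly k} B B (fun b x => b * x) d.

Inductive in_subalg (k : fieldType) (A : comAlgType k) (S : seq A) : A -> Prop :=
  | sub_gen x : x \in S -> in_subalg S x
  | sub_scal (c : k) : in_subalg S (c%:A)
  | sub_add x y : in_subalg S x -> in_subalg S y -> in_subalg S (x + y)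
  | sub_mul x y : in_subalg S x -> in_subalg S y -> in_subalg S (x * y).

Definition fingen_alg (k : fieldType) (A : comAlgType k) : Prop :=
  exists S : seq A, forall a : A, in_subalg S a.

Definition in_tpow (k : fieldType) (B : algType {poly k}) (m : nat) (x : B) : Prop :=
  exists y : B, x = 'X^m *: y.

Definition in_tD (k : fieldType) (B : algType {poly k}) (i : nat) (d : B -> B) : Prop :=
  exists d', DB d' /\ forall x, d x = 'X^i *: d' x.

(* ---------- A (x)_k k_n, modelled by coefficient vectors sum_i a_i t^i ---------- *)
Definition ATn (k : fieldType) (A : comAlgType k) (n : nat) := {ffun 'I_n.+1 -> A}.

Definition mul_tr (k : fieldType) (A : comAlgType k) (n : nat) (f g : ATn A n) : ATn A n :=
  [ffun m : 'I_n.+1 => \sum_(i < n.+1 | (i <= m)%N) f i * g (inord (m - i))].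

(* multiplication by t *)
Definition tsh (k : fieldType) (A : comAlgType k) (n : nat) (g : ATn A n) : ATn A n :=
  [ffun m : 'I_n.+1 => if (m == 0 :> nat) then 0 else g (inord m.-1)].

Definition pact (k : fieldType) (A : comAlgType k) (n : nat) (p : {poly k}) (g : ATn A n)
  : ATn A n :=
  [ffun m : 'I_n.+1 => \sum_(i < n.+1) p`_i *: (iter i (@tsh k A n) g) m].

Definition DATn (k : fieldType) (A : comAlgType k) (n : nat) (E : ATn A n -> ATn A n) : Prop :=
  (forall (p : {poly k}) (g h : ATn A n),
      E [ffun m => pact p g m + h m] = [ffun m => pact p (E g) m + E h m])
  /\ is_diff (@mul_tr k A n) E.

(* psi m : t^m B -> A induces t^m B / t^(m+1) B ~ A = degree-m part of A (x) k_n *)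
Record graded_iso (k : fieldType) (A : comAlgType k) (n : nat) (B : algType {poly k})
  (psi : nat -> B -> A) : Prop := {
  gi_lin : forall m (c : k) (x y : B), (m <= n)%N -> in_tpow m x -> in_tpow m y ->
             psi m (c%:P *: x + y) = c *: psi m x + psi m y;
  gi_ker : forall m (x : B), (m <= n)%N -> in_tpow m x ->
             (psi m x = 0 <-> in_tpow m.+1 x);
  gi_surj : forall m (a : A), (m <= n)%N -> exists x : B, in_tpow m x /\ psi m x = a;
  gi_mul : forall i j (x y : B), (i + j <= n)%N -> in_tpow i x -> in_tpow j y ->
             psi (i + j)%N (x * y) = psi i x * psi j y;
  gi_t : forall m (x : B), (m < n)%N -> in_tpow m x -> psi m.+1 ('X *: x) = psi m x;
  gi_1 : psi 0%N 1 = 1 }.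

(* E is (the transport to A (x) k_n of) gamma([d]) for d in t^i D(B) *)
Definition gamma_rep (k : fieldType) (A : comAlgType k) (n : nat) (B : algType {poly k})
  (psi : nat -> B -> A) (i : nat) (d : B -> B) (E : ATn A n -> ATn A n) : Prop :=
  forall (g : ATn A n) (x : 'I_n.+1 -> B),
    (forall j : 'I_n.+1, in_tpow j (x j) /\ psi j (x j) = g j) ->
    forall m : 'I_n.+1,
      E g m = if (i <= m)%N then psi m (d (x (inord (m - i)))) else 0.

(* B induces a deformation of D(A): gamma : gr D(B) = (+)_(i<=n) t^iD(B)/t^(i+1)D(B)
   -> D(gr B) is bijective *)
Definition deformation (k : fieldType) (A : comAlgType k) (n : nat) (B : algType {poly k})
  (psi : nat -> B -> A) : Prop :=
  (forall (ds : 'I_n.+1 -> B -> B) (Es : 'I_n.+1 -> ATn A n -> ATn A n),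
     (forall i : 'I_n.+1, in_tD i (ds i) /\ gamma_rep psi i (ds i) (Es i)) ->
     (forall g, \sum_(i < n.+1) Es i g = 0) ->
     forall i : 'I_n.+1, in_tD i.+1 (ds i))
  /\
  (forall E : ATn A n -> ATn A n, DATn E ->
     exists (ds : 'I_n.+1 -> B -> B) (Es : 'I_n.+1 -> ATn A n -> ATn A n),
       (forall i : 'I_n.+1, in_tD i (ds i) /\ gamma_rep psi i (ds i) (Es i)) /\
       (forall g, E g = \sum_(i < n.+1) Es i g)).

(* residue map: tau(d) = P, i.e. d induces P on B/tB ~ A *)
Definition residue_is (k : fieldType) (A : comAlgType k) (B : algType {poly k})
  (psi : nat -> B -> A) (d : B -> B) (P : A -> A) : Prop :=
  forall x : B, psi 0%N (d x) = P (psi 0%N x).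

Definition alg_section (k : fieldType) (A : comAlgType k) (B : algType {poly k})
  (psi : nat -> B -> A) (s : (A -> A) -> (B -> B)) : Prop :=
  (forall P, DA P -> DB (s P)) /\
  (forall P Q, DA P -> DA Q -> s (fun x => P x + Q x) =1 (fun x => s P x + s Q x)) /\
  (forall (c : k) P, DA P -> s (fun x => c *: P x) =1 (fun x => c%:P *: s P x)) /\
  (forall P Q, DA P -> DA Q -> s (P \o Q) =1 (s P \o s Q)) /\
  (s (fun x => x) =1 (fun x => x)) /\
  (forall P, DA P -> residue_is psi (s P) P).

Definition act_ATn (k : fieldType) (A : comAlgType k) (n : nat) (B : algType {poly k})
  (s : (A -> A) -> (B -> B)) (f : ATn A n) (b : B) : B :=
  \sum_(i < n.+1) 'X^i *: s (fun x => f i * x) b.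

(* For both rings acting on B (B itself by left multiplication, and A (x) k_n
   through s), an element acts on every graded piece t^j B / t^(j+1) B = A as
   multiplication by its residue in A.  Hence if e is a differential operator
   for one of the actions and e(B) lies in t^j B, the map it induces from
   B/tB = A to t^j B / t^(j+1) B = A is a differential operator P on A, and
   e - t^j s(P) maps B into t^(j+1) B.  Every t^j s(P) is a differential
   operator for both actions (for A (x) k_n because s is multiplicative, so
   [s(a), s(P)] = s([a, P])).  Since t^(n+1) B = 0, descending along the
   filtration writes e as a sum of such operators. *)

From HB Require Import structures.
From mathcomp Require Import all_boot all_order all_algebra.
From Stdlib Require Import FunctionalExtensionality.
Set Implicit Arguments. Unset Strict Implicit. Unset Printing Implicit Defensive.
Import GRing.Theory.
Local Open Scope ring_scope.

Section LinOver.
Variables (R : pzRingType) (M : lmodType R).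
Implicit Types (d e : M -> M) (x y : M).

Lemma lin_over0 d : lin_over d -> d 0 = 0.
Proof.
move=> hd; apply: (addrI (d 0)).
by have := hd 1 0 0; rewrite !scale1r !addr0.
Qed.

Lemma lin_overD d x y : lin_over d -> d (x + y) = d x + d y.
Proof. by move=> hd; have := hd 1 x y; rewrite !scale1r. Qed.

Lemma lin_overZ d r x : lin_over d -> d (r *: x) = r *: d x.
Proof. by move=> hd; have := hd r x 0; rewrite !addr0 lin_over0 ?addr0. Qed.

Lemma lin_overN d x : lin_over d -> d (- x) = - d x.
Proof. by move=> hd; rewrite -scaleN1r lin_overZ // scaleN1r. Qed.

Lemma lin_overB d x y : lin_over d -> d (x - y) = d x - d y.
Proof. by move=> hd; rewrite lin_overD // lin_overN. Qed.

Lemma lin_over_sum d (I : Type) (r : seq I) (F : I -> M) :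
  lin_over d -> d (\sum_(i <- r) F i) = \sum_(i <- r) d (F i).
Proof.
move=> hd; elim: r => [|i r IH]; first by rewrite !big_nil lin_over0.
by rewrite !big_cons lin_overD // IH.
Qed.

Lemma lin_over_cst0 : lin_over (fun _ : M => 0).
Proof. by move=> r x y; rewrite scaler0 addr0. Qed.

Lemma lin_over_addf d e : lin_over d -> lin_over e -> lin_over (fun x => d x + e x).
Proof. by move=> hd he r x y; rewrite hd he scalerDr addrACA. Qed.

Lemma lin_over_oppf d : lin_over d -> lin_over (fun x => - d x).
Proof. by move=> hd r x y; rewrite hd opprD scalerN. Qed.

Lemma lin_over_comp d e : lin_over d -> lin_over e -> lin_over (fun x => d (e x)).
Proof. by move=> hd he r x y; rewrite he hd. Qed.

Lemma lin_over_comm_op d e : lin_over d -> lin_over e -> lin_over (comm_op d e).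
Proof.
move=> hd he; apply: lin_over_addf; first exact: lin_over_comp.
by apply: lin_over_oppf; apply: lin_over_comp.
Qed.

Lemma lin_over_sumf (I : Type) (r : seq I) (F : I -> M -> M) :
  (forall i, lin_over (F i)) -> lin_over (fun x => \sum_(i <- r) F i x).
Proof.
move=> hF; elim: r => [|i r IH].
  by move=> c x y; rewrite !big_nil scaler0 addr0.
by move=> c x y; rewrite !big_cons hF IH scalerDr addrACA.
Qed.

End LinOver.

Lemma lin_over_scalef (R : comPzRingType) (M : lmodType R) (d : M -> M) p :
  lin_over d -> lin_over (fun x => p *: d x).
Proof. by move=> hd r x y; rewrite hd scalerDr !scalerA mulrC. Qed.

Section DiffLt.
Variables (R : pzRingType) (M : lmodType R) (C : Type) (act : C -> M -> M).
Hypothesis act_lin : forall c, lin_over (act c).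
Implicit Types (d e : M -> M).

Fixpoint diff_lt (q : nat) d : Prop :=
  if q is q'.+1 then forall c, diff_lt q' (comm_op (act c) d) else forall x, d x = 0.

Lemma diff_order_lt m d : diff_order act m d <-> diff_lt m.+1 d.
Proof.
elim: m d => [|m IH] d /=.
  split=> [H c x | H [|c [|? ?]] // _ x]; first exact: (H [:: c]).
  exact: H.
split=> [H c | H [|c fs] //= [Hs] x].
  by apply/IH => fs Hs x; apply: (H (c :: fs)); rewrite /= Hs.
exact: (proj2 (IH _) (H c)).
Qed.

Lemma diff_ltS q d : diff_lt q d -> diff_lt q.+1 d.
Proof.
elim: q d => [|q IH] d /= H c; last exact: IH.
by move=> x; rewrite /comm_op !H lin_over0 ?subr0.
Qed.

Lemma diff_lt_le q q' d : (q <= q')%N -> diff_lt q d -> diff_lt q' d.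
Proof.
move/subnKC <-; elim: (q' - q)%N => [|m IH] H; first by rewrite addn0.
by rewrite addnS; apply/diff_ltS/IH.
Qed.

Lemma is_diff_lt d : is_diff act d <-> exists q, diff_lt q d.
Proof.
split=> [[m /diff_order_lt H] | [q H]]; first by exists m.+1.
by exists q; apply/diff_order_lt/diff_ltS.
Qed.

Lemma diff_lt_cst0 q : diff_lt q (fun _ => 0).
Proof.
elim: q => [|q IH] //= c.
suff -> : comm_op (act c) (fun _ => 0) = (fun _ => 0) by [].
by apply: functional_extensionality => x; rewrite /comm_op lin_over0 ?subr0.
Qed.

Lemma diff_lt_add q d e :
  diff_lt q d -> diff_lt q e -> diff_lt q (fun x => d x + e x).
Proof.
elim: q d e => [|q IH] d e /= Hd He; first by move=> x; rewrite Hd He addr0.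
move=> c; suff -> : comm_op (act c) (fun x => d x + e x) =
    (fun x => comm_op (act c) d x + comm_op (act c) e x) by exact: IH.
by apply: functional_extensionality => x; rewrite /comm_op lin_overD // opprD addrACA.
Qed.

Lemma diff_lt_scale q d r : diff_lt q d -> diff_lt q (fun x => r *: d x).
Proof.
elim: q d => [|q IH] d /= Hd; first by move=> x; rewrite Hd scaler0.
move=> c; suff -> : comm_op (act c) (fun x => r *: d x) =
    (fun x => r *: comm_op (act c) d x) by exact: IH.
by apply: functional_extensionality => x; rewrite /comm_op lin_overZ // scalerBr.
Qed.

Lemma diff_lt_sum q (I : Type) (r : seq I) (F : I -> M -> M) :
  (forall i, diff_lt q (F i)) -> diff_lt q (fun x => \sum_(i <- r) F i x).
Proof.
move=> HF; elim: r => [|i r IH].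
  suff -> : (fun x => \sum_(i <- [::]) F i x) = (fun _ => 0) by exact: diff_lt_cst0.
  by apply: functional_extensionality => x; rewrite big_nil.
suff -> : (fun x => \sum_(j <- i :: r) F j x) = (fun x => F i x + \sum_(j <- r) F j x).
  exact: diff_lt_add.
by apply: functional_extensionality => x; rewrite big_cons.
Qed.

Lemma diffop_mod_add d e :
  diffop_mod act d -> diffop_mod act e -> diffop_mod act (fun x => d x + e x).
Proof.
move=> [ld /is_diff_lt [q Hd]] [le /is_diff_lt [q' He]].
split; first exact: lin_over_addf.
apply/is_diff_lt; exists (q + q')%N.
by apply: diff_lt_add; [apply: diff_lt_le Hd | apply: diff_lt_le He];
  rewrite ?leq_addr ?leq_addl.
Qed.

Lemma diffop_mod_sub d e :
  diffop_mod act d -> diffop_mod act e -> diffop_mod act (fun x => d x - e x).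
Proof.
move=> hd [le /is_diff_lt [q He]]; apply: diffop_mod_add => //.
split; first exact: lin_over_oppf.
apply/is_diff_lt; exists q.
suff -> : (fun x => - e x) = (fun x => (-1) *: e x) by exact: diff_lt_scale.
by apply: functional_extensionality => x; rewrite scaleN1r.
Qed.

Lemma diffop_mod_cst0 : diffop_mod act (fun _ => 0).
Proof. by split; [exact: lin_over_cst0 | apply/is_diff_lt; exists 0%N]. Qed.

End DiffLt.

Lemma diffop_mod_scale (R : comPzRingType) (M : lmodType R) (C : Type)
    (act : C -> M -> M) d p :
  (forall c, lin_over (act c)) -> diffop_mod act d ->
  diffop_mod act (fun x => p *: d x).
Proof.
move=> act_lin [ld /(is_diff_lt act_lin) [q Hd]].
split; first exact: lin_over_scalef.
by apply/(is_diff_lt act_lin); exists q; apply: diff_lt_scale.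
Qed.

Lemma lin_over_mull (R : pzRingType) (B : algType R) (b : B) :
  lin_over (fun x => b * x).
Proof. by move=> r x y; rewrite mulrDr -scalerAr. Qed.

Section DiffOpsOnAlgebra.
Variables (k : fieldType) (A : comAlgType k).
Implicit Types (a : A) (P : A -> A).

Let mul_act a x : A := a * x.

Lemma mul_act_lin a : lin_over (mul_act a).
Proof. by move=> r x y; rewrite /mul_act mulrDr scalerAr. Qed.

Lemma DA_mul a : DA (mul_act a).
Proof.
split; first exact: mul_act_lin.
by apply/(is_diff_lt mul_act_lin); exists 1%N => c x; rewrite /comm_op /mul_act mulrCA subrr.
Qed.

Lemma diff_lt_mull q P a : diff_lt mul_act q P -> diff_lt mul_act q (fun x => a * P x).
Proof.
elim: q P => [|q IH] P /= HP; first by move=> x; rewrite HP mulr0.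
move=> c; suff -> : comm_op (mul_act c) (fun x => a * P x) =
    (fun x => a * comm_op (mul_act c) P x) by exact: IH.
by apply: functional_extensionality => x; rewrite /comm_op /mul_act mulrBr mulrCA.
Qed.

Lemma diff_lt_mulr q P a : diff_lt mul_act q P -> diff_lt mul_act q (fun x => P (a * x)).
Proof.
elim: q P => [|q IH] P /= HP; first by move=> x; rewrite HP.
move=> c; suff -> : comm_op (mul_act c) (fun x => P (a * x)) =
    (fun x => comm_op (mul_act c) P (a * x)) by exact: IH.
by apply: functional_extensionality => x; rewrite /comm_op /mul_act mulrCA.
Qed.

Lemma DA_mull P a : DA P -> DA (fun x => a * P x).
Proof.
case=> lP /(is_diff_lt mul_act_lin) [q HP]; split.
  by move=> r x y; rewrite lP mulrDr scalerAr.
by apply/(is_diff_lt mul_act_lin); exists q; apply: diff_lt_mull.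
Qed.

Lemma DA_mulr P a : DA P -> DA (fun x => P (a * x)).
Proof.
case=> lP /(is_diff_lt mul_act_lin) [q HP]; split.
  by move=> r x y; rewrite mulrDr -scalerAr lP.
by apply/(is_diff_lt mul_act_lin); exists q; apply: diff_lt_mulr.
Qed.

Lemma DA_scale P c : DA P -> DA (fun x => c *: P x).
Proof. exact: diffop_mod_scale mul_act_lin. Qed.

End DiffOpsOnAlgebra.

Section TadicFiltration.
Variables (k : fieldType) (B : algType {poly k}).
Implicit Types (x y : B) (m : nat).

Lemma in_tpow_deg0 x : in_tpow 0 x.
Proof. by exists x; rewrite expr0 scale1r. Qed.

Lemma in_tpow0 m : in_tpow m (0 : B).
Proof. by exists 0; rewrite scaler0. Qed.

Lemma in_tpowD m x y : in_tpow m x -> in_tpow m y -> in_tpow m (x + y).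
Proof. by move=> [x' ->] [y' ->]; exists (x' + y'); rewrite scalerDr. Qed.

Lemma in_tpowN m x : in_tpow m x -> in_tpow m (- x).
Proof. by move=> [x' ->]; exists (- x'); rewrite scalerN. Qed.

Lemma in_tpowB m x y : in_tpow m x -> in_tpow m y -> in_tpow m (x - y).
Proof. by move=> hx hy; apply/in_tpowD/in_tpowN. Qed.

Lemma in_tpowZ m p x : in_tpow m x -> in_tpow m (p *: x).
Proof. by move=> [x' ->]; exists (p *: x'); rewrite !scalerA mulrC. Qed.

Lemma in_tpow_sum m (I : Type) (r : seq I) (F : I -> B) :
  (forall i, in_tpow m (F i)) -> in_tpow m (\sum_(i <- r) F i).
Proof.
move=> HF; elim: r => [|i r IH]; first by rewrite big_nil; apply: in_tpow0.
by rewrite big_cons; apply: in_tpowD.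
Qed.

Lemma in_tpow_lin m (d : B -> B) x : lin_over d -> in_tpow m x -> in_tpow m (d x).
Proof. by move=> hd [x' ->]; exists (d x'); rewrite lin_overZ. Qed.

Lemma in_tpowS m x : in_tpow m.+1 x -> in_tpow m x.
Proof. by move=> [x' ->]; exists ('X *: x'); rewrite scalerA -exprSr. Qed.

Lemma in_tpowX m x : in_tpow m x -> in_tpow m.+1 ('X *: x).
Proof. by move=> [x' ->]; exists x'; rewrite scalerA -exprS. Qed.

Lemma in_tpowXn m x : in_tpow m ('X^m *: x).
Proof. by exists x. Qed.

Lemma in_tpow_nilp n x : 'X^n *: (1 : B) = 0 -> in_tpow n x -> x = 0.
Proof. by move=> tn0 [x' ->]; rewrite -(mul1r x') scalerAl tn0 mul0r. Qed.

End TadicFiltration.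

Definition into_tpow (k : fieldType) (B : algType {poly k}) (j : nat) (e : B -> B) :=
  forall x, in_tpow j (e x).

Section GradedIso.
Variables (k : fieldType) (A : comAlgType k) (n : nat) (B : algType {poly k}).
Variable psi : nat -> B -> A.
Hypothesis hpsi : graded_iso n psi.
Implicit Types (x y : B) (e : B -> B) (a : A) (P : A -> A).

Lemma psiD j x y : (j <= n)%N -> in_tpow j x -> in_tpow j y ->
  psi j (x + y) = psi j x + psi j y.
Proof. by move=> hj hx hy; have := gi_lin hpsi 1 hj hx hy; rewrite !scale1r. Qed.

Lemma psi0 j : (j <= n)%N -> psi j 0 = 0.
Proof.
move=> hj; apply: (addrI (psi j 0)).
by rewrite -psiD ?addr0 //; apply: in_tpow0.
Qed.

Lemma psiB j x y : (j <= n)%N -> in_tpow j x -> in_tpow j y ->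
  psi j (x - y) = psi j x - psi j y.
Proof.
move=> hj hx hy; have := gi_lin hpsi (-1) hj hy (in_tpow0 _ j).
rewrite addr0 polyCN !scaleN1r psi0 // addr0 => psiN.
by rewrite psiD ?psiN //; apply: in_tpowN.
Qed.

Lemma psiXn j y : (j <= n)%N -> psi j ('X^j *: y) = psi 0 y.
Proof.
elim: j => [|j IH] hj; first by rewrite expr0 scale1r.
by rewrite exprS -scalerA (gi_t hpsi) ?IH ?(ltnW hj) //; apply: in_tpowXn.
Qed.

Lemma psi_tpowS j x : (j <= n)%N -> in_tpow j.+1 x -> psi j x = 0.
Proof. by move=> hj hx; apply/(gi_ker hpsi hj (in_tpowS hx)). Qed.

Lemma psi0_surj a : exists x, psi 0 x == a.
Proof. by have [x [_ <-]] := gi_surj hpsi a (leq0n n); exists x. Qed.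

Lemma psi_mull j (b : B) z : (j <= n)%N -> in_tpow j z ->
  psi j (b * z) = psi 0 b * psi j z.
Proof. by move=> hj; apply: (gi_mul hpsi (i := 0)) => //; apply: in_tpow_deg0. Qed.

Lemma psi0_onto a : exists x, psi 0 x = a.
Proof. by have [x /eqP] := psi0_surj a; exists x. Qed.

Definition psi0_preim a : B := xchoose (psi0_surj a).

Lemma psi0_preimK a : psi 0 (psi0_preim a) = a.
Proof. exact/eqP/(xchooseP (psi0_surj a)). Qed.

(* [x - x'] lies in [tB], so [e (x - x')] lies in [t^(j+1) B], the kernel of [psi j]. *)
Lemma psi_into_tpow_congr j e x x' : (j <= n)%N -> lin_over e -> into_tpow j e ->
  psi 0 x = psi 0 x' -> psi j (e x) = psi j (e x').
Proof.
move=> hj le he hxx'.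
have : psi 0 (x - x') = 0 by rewrite psiB ?hxx' ?subrr //; apply: in_tpow_deg0.
move/(gi_ker hpsi (leq0n n) (in_tpow_deg0 _))=> [y Hy].
have : psi j (e (x - x')) = 0.
  by apply: psi_tpowS => //; rewrite Hy expr1 lin_overZ //; apply/in_tpowX/he.
by rewrite lin_overB // psiB // => /eqP; rewrite subr_eq0 => /eqP.
Qed.

(* The map [B/tB = A -> t^j B / t^(j+1) B = A] induced by [e]. *)
Definition symbol j e : A -> A := fun a => psi j (e (psi0_preim a)).

Lemma symbolE j e x : (j <= n)%N -> lin_over e -> into_tpow j e ->
  symbol j e (psi 0 x) = psi j (e x).
Proof. by move=> hj le he; apply: psi_into_tpow_congr; rewrite ?psi0_preimK. Qed.

Lemma symbol_lin j e : (j <= n)%N -> lin_over e -> into_tpow j e -> lin_over (symbol j e).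
Proof.
move=> hj le he r a a'.
have := gi_lin hpsi r (leq0n n) (in_tpow_deg0 (psi0_preim a)) (in_tpow_deg0 (psi0_preim a')).
rewrite !psi0_preimK => <-.
by rewrite symbolE // le (gi_lin hpsi).
Qed.

Lemma sub_symbol_into_tpowS (s : (A -> A) -> B -> B) j e :
  (forall P, DA P -> residue_is psi (s P) P) ->
  (j <= n)%N -> lin_over e -> into_tpow j e -> DA (symbol j e) ->
  into_tpow j.+1 (fun x => e x - 'X^j *: s (symbol j e) x).
Proof.
move=> hres hj le he hP x.
apply/(gi_ker hpsi hj); first by apply: in_tpowB => //; apply: in_tpowXn.
by rewrite psiB ?psiXn ?hres ?symbolE ?subrr //; apply: in_tpowXn.
Qed.

End GradedIso.

Section LiftedAction.
Variables (k : fieldType) (A : comAlgType k) (n : nat) (B : algType {poly k}).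
Variable psi : nat -> B -> A.
Hypothesis hpsi : graded_iso n psi.
Variables (C : Type) (act : C -> B -> B) (phi : C -> A).
Hypothesis act_lin : forall c, lin_over (act c).
Hypothesis act_psi : forall j c z, (j <= n)%N -> in_tpow j z ->
  psi j (act c z) = phi c * psi j z.
Hypothesis phi_surj : forall a, exists c, phi c = a.
Implicit Types (e : B -> B).

Lemma into_tpow_comm_op j c e : lin_over e -> into_tpow j e ->
  into_tpow j (comm_op (act c) e).
Proof. by move=> le he x; apply: in_tpowB; [apply/in_tpow_lin/he | apply: he]. Qed.

Lemma symbol_comm_op j c e : (j <= n)%N -> lin_over e -> into_tpow j e ->
  symbol hpsi j (comm_op (act c) e) = comm_op (fun a => phi c * a) (symbol hpsi j e).
Proof.
move=> hj le he; apply: functional_extensionality => a.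
rewrite /symbol /comm_op (psiB hpsi) ?act_psi //; last exact: in_tpow_lin.
rewrite -(symbolE hpsi (act c (psi0_preim hpsi a)) hj le he).
by rewrite act_psi ?(psi0_preimK hpsi) //; apply: in_tpow_deg0.
Qed.

Lemma symbol_diff_lt j q e : (j <= n)%N -> lin_over e -> into_tpow j e ->
  diff_lt act q e -> diff_lt (fun a x : A => a * x) q (symbol hpsi j e).
Proof.
move=> hj; elim: q e => [|q IH] e le he /= He a.
  by rewrite /symbol He (psi0 hpsi).
have [c <-] := phi_surj a.
rewrite -symbol_comm_op //; apply: IH; last exact: He.
  exact: lin_over_comm_op.
exact: into_tpow_comm_op.
Qed.

Lemma symbol_DA j e : (j <= n)%N -> diffop_mod act e -> into_tpow j e ->
  DA (symbol hpsi j e).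
Proof.
move=> hj [le /(is_diff_lt act_lin) [q He]] he; split; first exact: symbol_lin.
apply/(is_diff_lt (@mul_act_lin _ A)); exists q; exact: symbol_diff_lt.
Qed.

Lemma diffop_mod_transfer (s : (A -> A) -> B -> B) (CT : Type) (actT : CT -> B -> B) :
  'X^(n.+1) *: (1 : B) = 0 ->
  (forall P, DA P -> residue_is psi (s P) P) ->
  (forall c, lin_over (actT c)) ->
  (forall P j, DA P -> diffop_mod act (fun x => 'X^j *: s P x)) ->
  (forall P j, DA P -> diffop_mod actT (fun x => 'X^j *: s P x)) ->
  forall e, diffop_mod act e -> diffop_mod actT e.
Proof.
move=> tn0 hres actT_lin s_diff sT_diff.
(* Downward induction on [j], with [i = n.+1 - j]. *)
suff H i j e : (i + j = n.+1)%N -> diffop_mod act e -> into_tpow j e -> diffop_mod actT e.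
  by move=> e he; apply: (H n.+1 0%N) => // [|x]; [rewrite addn0 | apply: in_tpow_deg0].
elim: i j e => [|i IH] j e /= hij he hej.
  suff -> : e = fun _ => 0 by apply: diffop_mod_cst0.
  by apply: functional_extensionality => x; apply: (in_tpow_nilp tn0); rewrite -hij.
have hj : (j <= n)%N by rewrite -ltnS -hij addSn ltnS leq_addl.
have hP := symbol_DA hj he hej.
set P := symbol hpsi j e in hP *.
have he' : diffop_mod act (fun x => e x - 'X^j *: s P x).
  exact: diffop_mod_sub (s_diff P j hP).
have hej' := sub_symbol_into_tpowS hres hj he.1 hej hP.
have {}he' := IH j.+1 _ (etrans (addnS _ _) hij) he' hej'.
suff -> : e = fun x => (e x - 'X^j *: s P x) + 'X^j *: s P x.
  exact: diffop_mod_add (sT_diff P j hP).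
by apply: functional_extensionality => x; rewrite subrK.
Qed.

End LiftedAction.

Section Splitting.
Variables (k : fieldType) (A : comAlgType k) (n : nat) (B : algType {poly k}).
Variables (psi : nat -> B -> A) (s : (A -> A) -> B -> B).
Hypothesis hs : alg_section psi s.
Implicit Types (a : A) (P : A -> A) (f : ATn A n).

Lemma section_lin P : DA P -> lin_over (s P).
Proof. by case: hs => s_DB _ /s_DB []. Qed.

Lemma section_cst0 x : s (fun _ => 0) x = 0.
Proof.
case: hs => _ [_ [s_scale _]].
have := s_scale 0 _ (diffop_mod_cst0 (@mul_act_lin _ A)) x.
by rewrite polyC0 !scale0r.
Qed.

Lemma section_comm_op a P x : DA P ->
  comm_op (s (fun y => a * y)) (s P) x = s (comm_op (fun y => a * y) P) x.
Proof.
move=> hP; case: hs => _ [s_add [s_scale [s_comp _]]].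
have -> : comm_op (fun y => a * y) P =
    (fun y => (fun z => a * P z) y + (fun z => (-1) *: P (a * z)) y).
  by apply: functional_extensionality => y; rewrite /comm_op scaleN1r.
rewrite s_add ?s_scale ?polyCN ?scaleN1r; last first.
- exact/DA_scale/DA_mulr.
- exact: DA_mull.
- exact: DA_mulr.
by rewrite /comm_op (s_comp _ _ (DA_mul a) hP) (s_comp _ _ hP (DA_mul a)).
Qed.

Lemma act_ATn_lin f : lin_over (act_ATn s f).
Proof. by apply: lin_over_sumf => i; apply/lin_over_scalef/section_lin/DA_mul. Qed.

Lemma section_diff_lt q P : lin_over P -> diff_lt (fun a x : A => a * x) q P ->
  diff_lt (act_ATn (n := n) s) q (s P).
Proof.
elim: q P => [|q IH] P lP /= HP.
  have -> : P = fun _ => 0 by apply: functional_extensionality.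
  exact: section_cst0.
have hP : DA P.
  by split=> //; apply/(is_diff_lt (@mul_act_lin _ A)); exists q.+1.
move=> f; suff -> : comm_op (act_ATn s f) (s P) =
    (fun x => \sum_(i < n.+1) 'X^i *: s (comm_op (fun y => f i * y) P) x).
  apply: diff_lt_sum => [c|i]; first exact: act_ATn_lin.
  apply: diff_lt_scale; first exact: act_ATn_lin.
  by apply: IH; [apply: lin_over_comm_op; [apply: mul_act_lin|] | apply: HP].
apply: functional_extensionality => x.
rewrite /comm_op /act_ATn (lin_over_sum _ _ (section_lin hP)) -sumrB.
apply: eq_bigr => i _; rewrite (lin_overZ _ _ (section_lin hP)) -scalerBr.
by rewrite -section_comm_op.
Qed.

Lemma diffop_ATn_section P j : DA P ->
  diffop_mod (act_ATn (n := n) s) (fun x => 'X^j *: s P x).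
Proof.
move=> hP; apply: diffop_mod_scale; first exact: act_ATn_lin.
split; first exact: section_lin.
case: hP => lP /(is_diff_lt (@mul_act_lin _ A)) [q HP].
by apply/(is_diff_lt act_ATn_lin); exists q; apply: section_diff_lt.
Qed.

Lemma DB_section P j : DA P -> DB (fun x => 'X^j *: s P x).
Proof.
move=> hP; apply: diffop_mod_scale; first exact: lin_over_mull.
by case: hs => s_DB _; apply: s_DB.
Qed.

Hypothesis hpsi : graded_iso n psi.

Lemma psi_act_ATn j f z : (j <= n)%N -> in_tpow j z ->
  psi j (act_ATn s f z) = f ord0 * psi j z.
Proof.
move=> hj hz; case: hs => _ [_ [_ [_ [_ s_res]]]].
have slin a : lin_over (s (fun y => a * y)) by apply/section_lin/DA_mul.
rewrite /act_ATn big_ord_recl /= expr0 scale1r.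
have hX (i : 'I_n) : in_tpow j.+1 ('X^(bump 0 i) *: s (fun y => f (lift ord0 i) * y) z).
  by rewrite exprS -scalerA; apply/in_tpowX/in_tpowZ/in_tpow_lin.
have hsum := in_tpow_sum (index_enum 'I_n) hX.
rewrite (psiD hpsi hj (in_tpow_lin (slin _) hz) (in_tpowS hsum)).
rewrite (psi_tpowS hpsi hj hsum) addr0.
case: hz => w ->.
by rewrite lin_overZ // !(psiXn hpsi _ hj) s_res //; apply: DA_mul.
Qed.

End Splitting.

Theorem lemma9p7 (k : fieldType) (A : comAlgType k) (n : nat) (B : algType {poly k})
  (hA : fingen_alg A)
  (hB : 'X^(n.+1) *: (1 : B) = 0)
  (psi : nat -> B -> A) (hpsi : graded_iso n psi)
  (hdef : deformation n psi)
  (s : (A -> A) -> (B -> B)) (hs : alg_section psi s) :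
  forall d : B -> B,
    DB d <-> @diffop_mod {poly k} B (ATn A n) (act_ATn s) d.
Proof.
have s_res : forall P, DA P -> residue_is psi (s P) P.
  by case: hs => _ [_ [_ [_ [_ s_res]]]].
have ord0_onto a : exists f : ATn A n, f ord0 = a.
  by exists [ffun i => if i == ord0 then a else 0]; rewrite ffunE eqxx.
have sB_diff P j : DA P -> DB (fun x => 'X^j *: s P x) := DB_section hs j.
have sATn_diff P j : DA P -> diffop_mod (act_ATn s) (fun x => 'X^j *: s P x) :=
  diffop_ATn_section n hs j.
move=> d; split.
- exact: (diffop_mod_transfer hpsi (@lin_over_mull _ B) (psi_mull hpsi)
    (psi0_onto hpsi) hB s_res (act_ATn_lin hs) sB_diff sATn_diff).
- exact: (diffop_mod_transfer hpsi (act_ATn_lin hs) (psi_act_ATn hs hpsi)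
    ord0_onto hB s_res (@lin_over_mull _ B) sATn_diff sB_diff).
Qed.
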